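(* Suppose $c, \Delta, t\in\mathbb{N}^+$ and $\Delta< t$. Let $V\subseteq [t]^c$. If there exists a function $\theta: V\to [c]$ such that for all $i\in [c]$ we have \[ \Big|\big\{\mathbf{v}(i)\mid \text{$\mathbf{v}\in V$ and $\theta(\mathbf{v})= i$}\big\}\Big| \le t- \Delta, \] then $|V|\le t^c- \Delta^c$.
   Context: For $n\in\mathbb N$, $[n]:=\{1,\ldots,n\}$, and $\mathbb N^+$ denotes the positive integers. For a tuple $\mathbf{v}\in[t]^c$ and $i\in[c]$, $\mathbf{v}(i)$ denotes the $i$-th coordinate of $\mathbf{v}$. *)

From mathcomp Require Import all_boot.
(* [t] is represented by 'I_t = {0,...,t-1} (a relabeling by i |-> i+1),
   [c] by 'I_c, and [t]^c by {ffun 'I_c -> 'I_t}. *)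

From mathcomp Require Import all_boot zify.

Set Implicit Arguments.
Unset Strict Implicit.

(* Every v in V avoids, at the coordinate theta v, the set S_i of values that
   the vectors assigned to i take there. So V misses the product of the
   complements of the S_i, a box of at least Delta^c points. *)

Lemma card_family_set (aT rT : finType) (F : aT -> {set rT}) :
  #|[set f in family F]| = \prod_(i : aT) #|F i|.
Proof. by rewrite cardsE card_family foldrE big_image. Qed.

Section ClaimedValues.

Variables (aT rT : finType) (V : {set {ffun aT -> rT}}).
Variable theta : {ffun aT -> rT} -> aT.

Definition claimed_values (i : aT) : {set rT} :=
  [set (v : {ffun aT -> rT}) i | v in V & theta v == i].

Definition unclaimed_box : {set {ffun aT -> rT}} :=
  [set f in family (fun i => ~: claimed_values i)].

Lemma subset_compl_unclaimed_box : V \subset ~: unclaimed_box.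
Proof.
apply/subsetP => v vV; rewrite !inE; apply/familyP => /(_ (theta v)).
rewrite inE => /negP; apply; apply/imsetP; exists v => //.
by rewrite inE vV eqxx.
Qed.

Lemma card_le_unclaimed_box :
  #|V| <= #|rT| ^ #|aT| - \prod_(i : aT) (#|rT| - #|claimed_values i|).
Proof.
apply: leq_trans (subset_leq_card subset_compl_unclaimed_box) _.
rewrite cardsCs setCK card_ffun card_family_set.
by under eq_bigr do rewrite cardsCs setCK.
Qed.

Lemma card_le_compl_power (d : nat) :
  d <= #|rT| -> (forall i, #|claimed_values i| <= #|rT| - d) ->
  #|V| <= #|rT| ^ #|aT| - d ^ #|aT|.
Proof.
move=> le_d_rT claimed_small; apply: leq_trans card_le_unclaimed_box _.
rewrite leq_sub2l // -prod_nat_const; apply: leq_prod => i _.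
by have := claimed_small i; lia.
Qed.

End ClaimedValues.

Theorem lemma4p5 (c Delta t : nat) (hc : 0 < c) (hD : 0 < Delta) (ht : 0 < t)
  (hDt : Delta < t) (V : {set {ffun 'I_c -> 'I_t}})
  (theta : {ffun 'I_c -> 'I_t} -> 'I_c) :
  (forall i : 'I_c, #|[set (v : {ffun 'I_c -> 'I_t}) i | v in V & theta v == i]| <= t - Delta) ->
  #|V| <= t ^ c - Delta ^ c.
Proof.
move=> claimed_small.
have := @card_le_compl_power _ _ V theta Delta.
rewrite !card_ord; apply; first exact: ltnW.
exact: claimed_small.
Qed.
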